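(* In the setting described in the context, suppose $(\eta^{l,n+1})_{l=1}^M$, $\psi^{n+1}$, $\xi^{n+1}$ (real grid functions) satisfy Scheme II given $(\eta^{l,n})_l$, $\psi^n$, $\xi^n$. Set $c^{l,m}=e^{\eta^{l,m}}$, $T^m=e^{\xi^m}$ for $m=n,n+1$. Then: (1) (mass conservation) $(e^{\eta^{l,n+1}},1)=(e^{\eta^{l,n}},1)$ for $l=1,\dots,M$; (2) (positivity) $c^{l,n+1}_i>0$ and $T^{n+1}_i>0$ for all $i,l$; (3) (discrete entropy increasing) with $S^m_h=-\sum_{l=1}^M(c^{l,m},\log c^{l,m})+(\log T^m+1,C_T)$, \[ \frac{S^{n+1}_h-S^n_h}{\Delta t}\ \ge\ \varepsilon\sum_{l=1}^M\big(\nu^le^{\eta^{l,n+1/2}}|\check{\mathbf u}^{l,n+1/2}|^2,R^{n+1/2}\big)+k\sum_{\sigma\in\mathcal E_{int}}\tau_\sigma\,\mathcal A_\sigma\big(e^{\xi^{n+1/2}}\big)\,D(\log R^{n+1/2})_{i,\sigma}\,DR^{n+1/2}_{i,\sigma}\ \ge 0 . \]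
   Context: Mesh. $\Omega\subset\mathbb R^d$ is a bounded polygonal/polyhedral domain with $\partial\Omega=\Gamma_D\cup\Gamma_N$, $\Gamma_D\cap\Gamma_N=\emptyset$. A Voronoi finite-volume mesh consists of points $\mathbf x_1,\dots,\mathbf x_N$ and control volumes $V_i=\{\mathbf y\in\Omega:|\mathbf y-\mathbf x_i|<|\mathbf y-\mathbf x_j|\ \forall j\ne i\}$. An interior face is $\sigma=\partial V_i\cap\partial V_j$ of positive $(d-1)$-measure, written $\sigma=i|j$; $\mathcal E_{int}$ is the set of interior faces and $\mathcal E_{i,int}$ those of $V_i$; $\mathcal E^D_{i,ext}$, $\mathcal E^N_{i,ext}$ are the faces of $\partial V_i$ lying in $\Gamma_D$, resp. $\Gamma_N$. $\mathrm m(\cdot)$ is Lebesgue measure (in dimension $d$ or $d-1$); $d_\sigma=|\mathbf x_i-\mathbf x_j|$ for $\sigma=i|j$ and $d_\sigma=\mathrm{dist}(\mathbf x_i,\sigma)$ for exterior faces of $V_i$; $\tau_\sigma=\mathrm m(\sigma)/d_\sigma$. Grid functions are vectors $u=(u_1,\dots,u_N)\in\mathbb R^N$; for $\sigma=i|j$, $Du_{i,\sigma}=u_j-u_i$. For positive $u$ and $\sigma=i|j$, $\mathcal A_\sigma u=\frac{(\mathrm m(V_i)+\mathrm m(V_j))u_iu_j}{\mathrm m(V_i)u_j+\mathrm m(V_j)u_i}$ (harmonic average). The discrete inner product is $(f,g)=\sum_{i=1}^N\mathrm m(V_i)f_ig_i$; exponentials, logarithms, products and quotients of grid functions are taken componentwise.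 Scheme II (modified Crank–Nicolson in the variables $\eta^l=\log c^l$, $\xi=\log T$). Parameters: $\varepsilon>0$, $k>0$, $C_T>0$, $\Delta t>0$, $\nu^l>0$, $z^l\in\mathbb R$, a grid function $\rho^f$, Dirichlet data $\psi^D_\sigma$ on $\Gamma_D$-faces, Neumann data $g_\sigma$ on $\Gamma_N$-faces. Define $e^{f^{n+1/2}}:=e^{(f^n+f^{n+1})/2}$ for $f=\xi,\eta^l$, $\psi^{n+1/2}=\frac12(\psi^n+\psi^{n+1})$, and \[Q^{l}=\eta^{l,n+1}-\frac{e^{\eta^{l,n+1}}-e^{\eta^{l,n}}}{2e^{\eta^{l,n+1}}}-\frac{(e^{\eta^{l,n+1}}-e^{\eta^{l,n}})^2}{6e^{2\eta^{l,n+1}}},\qquad R^{n+1/2}=e^{-\xi^{n+1}}+\frac{e^{\xi^{n+1}}-e^{\xi^n}}{2e^{2\xi^{n+1}}}+\frac{(e^{\xi^{n+1}}-e^{\xi^n})^2}{3e^{3\xi^{n+1}}}.\] For $\sigma=i|j$ define the face flux \[G^l_{i,\sigma}=-\frac1{\nu^ld_\sigma}\Big[\mathcal A_\sigma\big(e^{\eta^{l,n+1/2}+\xi^{n+1/2}}\big)DQ^l_{i,\sigma}+\mathcal A_\sigma\big(e^{\eta^{l,n+1/2}}\big)D\big(z^l\psi^{n+1/2}+e^{\xi^{n+1/2}}\big)_{i,\sigma}\Big],\] with zero flux through exterior faces. The scheme reads, for $i=1,\dots,N$, $l=1,\dots,M$: (a) $\frac{e^{\eta^{l,n+1}_i}-e^{\eta^{l,n}_i}}{\Delta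 t}+\frac{\varepsilon}{\mathrm m(V_i)}\sum_{\sigma\in\mathcal E_{i,int}}\mathrm m(\sigma)G^l_{i,\sigma}=0$; (b) $-\frac{\varepsilon^2}{\mathrm m(V_i)}\Big[\sum_{\sigma\in\mathcal E_{i,int}}\tau_\sigma D\psi^{n+1}_{i,\sigma}+\sum_{\sigma\in\mathcal E^D_{i,ext}}\tau_\sigma(\psi^D_\sigma-\psi^{n+1}_i)\Big]-\frac1{\mathrm m(V_i)}\sum_{\sigma\in\mathcal E^N_{i,ext}}\mathrm m(\sigma)g_\sigma=\sum_lz^le^{\eta^{l,n+1}_i}+\rho^f_i$; (c) $C_T\frac{e^{\xi^{n+1}_i}-e^{\xi^n_i}}{\Delta t}=-\frac{k}{\mathrm m(V_i)}\sum_{\sigma\in\mathcal E_{i,int}}\tau_\sigma\mathcal A_\sigma(e^{\xi^{n+1/2}})D(\log R^{n+1/2})_{i,\sigma}+\frac{P_i}{R^{n+1/2}_i}+\varepsilon\sum_l\nu^le^{\eta^{l,n+1/2}_i}|\check{\mathbf u}^{l,n+1/2}_i|^2$ (thermally insulated: no exterior-face terms), where \[P_i=\sum_{l=1}^M\Big[\frac{\varepsilon}{\mathrm m(V_i)}\sum_{\sigma\in\mathcal E_{i,int}}\mathrm m(\sigma)G^l_{i,\sigma}Q^l_\sigma+(1+Q^l_i)\frac{e^{\eta^{l,n+1}_i}-e^{\eta^{l,n}_i}}{\Delta t}\Big],\] $Q^l_\sigma$ is a face value of $Q^l$ depending only on $\sigma$, and $\check{\mathbf u}^{l,n+1/2}_i\in\mathbb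 R^d$ are given cell-wise velocity reconstructions; $|\check{\mathbf u}^{l,n+1/2}|^2$ is the grid function $i\mapsto|\check{\mathbf u}^{l,n+1/2}_i|^2$. In the last sum of the claim $\sigma=i|j$ with either orientation (the product is orientation-independent). *)

From HB Require Import structures.
From mathcomp Require Import all_boot all_order all_algebra.
From mathcomp Require Import reals sequences exp.
Set Implicit Arguments. Unset Strict Implicit. Unset Printing Implicit Defensive.
Import Order.TTheory GRing.Theory Num.Theory.
Local Open Scope ring_scope.

(* Interior faces sigma = i|j are elements of [face]; fc1/fc2 are its two
   (distinct) adjacent cells.  Exterior faces on Gamma_D (resp. Gamma_N)
   are elements of [dface] (resp. [nface]), each belonging to one cell. *)
Record mesh (R : realType) (N : nat) := Mesh {
  face : finType;
  fc1 : face -> 'I_N;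
  fc2 : face -> 'I_N;
  fc_neq : forall s, fc1 s != fc2 s;
  vol : 'I_N -> R;
  vol_pos : forall i, 0 < vol i;
  fmeas : face -> R;
  fmeas_pos : forall s, 0 < fmeas s;
  fdist : face -> R;               (* d_sigma = |x_i - x_j| *)
  fdist_pos : forall s, 0 < fdist s;
  dface : finType;
  downer : dface -> 'I_N;
  dmeas : dface -> R;
  dmeas_pos : forall e, 0 < dmeas e;
  ddist : dface -> R;              (* dist(x_i, sigma) *)
  ddist_pos : forall e, 0 < ddist e;
  nface : finType;
  nowner : nface -> 'I_N;
  nmeas : nface -> R;
  nmeas_pos : forall e, 0 < nmeas e
}.

Section MeshOps.
Variables (R : realType) (N : nat) (Th : mesh R N).

Definition tau (s : face Th) : R := fmeas s / fdist s.
Definition dtau (e : dface Th) : R := dmeas e / ddist e.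

Definition incident (i : 'I_N) (s : face Th) : bool :=
  (fc1 s == i) || (fc2 s == i).
Definition other (s : face Th) (i : 'I_N) : 'I_N :=
  if fc1 s == i then fc2 s else fc1 s.
Definition Dg (u : 'I_N -> R) (i : 'I_N) (s : face Th) : R :=
  u (other s i) - u i.
Definition harm (u : 'I_N -> R) (s : face Th) : R :=
  let i := fc1 s in let j := fc2 s in
  (vol Th i + vol Th j) * u i * u j / (vol Th i * u j + vol Th j * u i).
Definition ip (f g : 'I_N -> R) : R := \sum_i vol Th i * f i * g i.
End MeshOps.

Definition sqnorm (R : realType) (d : nat) (v : 'rV[R]_d) : R :=
  \sum_(k < d) v 0 k ^+ 2.

Section Scheme.
Variables (R : realType) (N M d : nat) (Th : mesh R N).
Variables (eps kk CT dt : R) (nu z : 'I_M -> R) (rhof : 'I_N -> R).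
Variables (psiD : dface Th -> R) (gN : nface Th -> R).
Variable (Qf : 'I_M -> face Th -> R).
Variable (u : 'I_M -> 'I_N -> 'rV[R]_d).
Variables (eta0 eta1 : 'I_M -> 'I_N -> R) (psi0 psi1 xi0 xi1 : 'I_N -> R).

Definition mid (f g : 'I_N -> R) (i : 'I_N) : R := (f i + g i) / 2.

Definition Qs (l : 'I_M) (i : 'I_N) : R :=
  let a := expR (eta1 l i) in let b := expR (eta0 l i) in
  eta1 l i - (a - b) / (2 * a) - (a - b) ^+ 2 / (6 * a ^+ 2).

Definition Rs (i : 'I_N) : R :=
  let a := expR (xi1 i) in let b := expR (xi0 i) in
  expR (- xi1 i) + (a - b) / (2 * a ^+ 2) + (a - b) ^+ 2 / (3 * a ^+ 3).

Definition Gflux (l : 'I_M) (i : 'I_N) (s : face Th) : R :=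
  - (1 / (nu l * fdist s)) *
    (harm (fun j => expR (mid (eta0 l) (eta1 l) j + mid xi0 xi1 j)) s
       * Dg (Qs l) i s
     + harm (fun j => expR (mid (eta0 l) (eta1 l) j)) s
       * Dg (fun j => z l * mid psi0 psi1 j + expR (mid xi0 xi1 j)) i s).

Definition Ps (i : 'I_N) : R :=
  \sum_(l < M)
    (eps / vol Th i * (\sum_(s : face Th | incident i s) fmeas s * Gflux l i s * Qf l s)
     + (1 + Qs l i) * (expR (eta1 l i) - expR (eta0 l i)) / dt).

Definition scheme_a : Prop :=
  forall (l : 'I_M) (i : 'I_N),
    (expR (eta1 l i) - expR (eta0 l i)) / dt
    + eps / vol Th i * (\sum_(s : face Th | incident i s) fmeas s * Gflux l i s) = 0.

Definition scheme_b : Prop :=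
  forall i : 'I_N,
    - (eps ^+ 2 / vol Th i) *
        ((\sum_(s : face Th | incident i s) tau s * Dg psi1 i s)
         + \sum_(e : dface Th | downer e == i) dtau e * (psiD e - psi1 i))
    - 1 / vol Th i * (\sum_(e : nface Th | nowner e == i) nmeas e * gN e)
    = \sum_(l < M) z l * expR (eta1 l i) + rhof i.

Definition scheme_c : Prop :=
  forall i : 'I_N,
    CT * (expR (xi1 i) - expR (xi0 i)) / dt =
    - (kk / vol Th i) *
        (\sum_(s : face Th | incident i s)
           tau s * harm (fun j => expR (mid xi0 xi1 j)) s
                 * Dg (fun j => ln (Rs j)) i s)
    + Ps i / Rs i
    + eps * \sum_(l < M)
        nu l * expR (mid (eta0 l) (eta1 l) i) * sqnorm (u l i).

Definition schemeII : Prop := [/\ scheme_a, scheme_b & scheme_c].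

Definition entropy (eta : 'I_M -> 'I_N -> R) (xi : 'I_N -> R) : R :=
  - (\sum_(l < M) ip Th (fun i => expR (eta l i)) (fun i => ln (expR (eta l i))))
  + ip Th (fun i => ln (expR (xi i)) + 1) (fun _ => CT).

End Scheme.

From HB Require Import structures.
From mathcomp Require Import all_boot all_order all_algebra.
From mathcomp Require Import classical_sets reals topology normedtype sequences derive exp.
From mathcomp Require Import ring lra.
Import Order.TTheory GRing.Theory Num.Theory.
Import numFieldNormedType.Exports.
Local Open Scope classical_set_scope.
Local Open Scope ring_scope.

(* Positivity is built into the exponential variables, and mass is conserved
   because the face fluxes G^l are antisymmetric.  For the entropy, Q^l and
   R^{n+1/2} are truncations of the series of ln (x / x0) in powers of
   1 - x0 / x, chosen so that the increments of c ln c and of ln T are bounded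
   by (1 + Q^l) (c^{n+1} - c^n) and R^{n+1/2} (T^{n+1} - T^n).  Multiplying
   scheme (c) by m(V_i) R_i then turns the entropy increment into three
   terms: the sum of G^l Q^l_sigma, which vanishes by antisymmetry; the heat
   flux, which summation by parts turns into
   k \sum tau A D(log R) D R >= 0 by monotonicity of ln; and the friction. *)

Section ExpInequalities.
Variable R : realType.
Implicit Types (f df : R -> R) (t x y : R).

Lemma MVT_at0 {f df} : (forall x, is_derive x 1 f (df x)) ->
  forall t, exists2 c, (0 <= c <= t) || (t <= c <= 0) & f t - f 0 = df c * t.
Proof.
move=> fD t.
have fC a b : {within `[a, b], continuous f}.
  by apply: derivable_within_continuous => x _.
have [t_ge0|t_lt0] := lerP 0 t.
  have [c] := MVT_segment t_ge0 (fun x _ => fD x) (fC 0 t).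
  by rewrite in_itv /= subr0 => ct ->; exists c; rewrite ?ct.
have [c] := MVT_segment (ltW t_lt0) (fun x _ => fD x) (fC t 0).
rewrite in_itv /= => ct e; exists c; first by rewrite ct orbT.
by rewrite -opprB e; ring.
Qed.

Lemma min_at0_of_derive_sign {f df} : (forall x, is_derive x 1 f (df x)) ->
  (forall x, x <= 0 -> df x <= 0) -> (forall x, 0 <= x -> 0 <= df x) ->
  forall t, f 0 <= f t.
Proof.
move=> fD dfN dfP t; rewrite -subr_ge0.
have [c /orP[]/andP[lec ler] ->] := MVT_at0 fD t.
  by rewrite mulr_ge0 ?dfP // (le_trans lec ler).
by rewrite mulr_le0 ?dfN // (le_trans lec ler).
Qed.

Lemma nonincr_at0_of_derive_le0 {f df} : (forall x, is_derive x 1 f (df x)) ->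
  (forall x, df x <= 0) -> forall t, (0 <= t -> f t <= f 0) /\ (t <= 0 -> f 0 <= f t).
Proof.
move=> fD dfN t; have [c _ /eqP] := MVT_at0 fD t.
rewrite subr_eq => /eqP ->; split => [t_ge0|t_le0].
  by rewrite gerDr mulr_le0_ge0 ?dfN.
by rewrite lerDr mulr_le0 ?dfN.
Qed.

(* With y = 1 - e^t, these are the remainders of -ln (1 - y) = \sum_k y^k / k
   after two and three terms; they have the signs of y^3 and y^4. *)
Definition log_rem2 t := - t - (1 - expR t) - (1 - expR t) ^+ 2 / 2.
Definition log_rem3 t := log_rem2 t - (1 - expR t) ^+ 3 / 3.

Lemma log_rem3_ge0 t : 0 <= log_rem3 t.
Proof.
have -> : 0 = log_rem3 0 by rewrite /log_rem3 /log_rem2 expR0; ring.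
apply: (@min_at0_of_derive_sign _ (fun x => - (1 - expR x) ^+ 3)) => [x|x x_le0|x x_ge0].
- by apply: is_derive_eq; rewrite /GRing.scale /=; field.
- by rewrite oppr_le0 exprn_ge0 // subr_ge0 -expR0 ler_expR.
- by rewrite oppr_ge0 exprn_odd_le0 // subr_le0 -expR0 ler_expR.
Qed.

Lemma log_rem2_sign t : (0 <= t -> log_rem2 t <= 0) /\ (t <= 0 -> 0 <= log_rem2 t).
Proof.
have rem2_0 : log_rem2 0 = 0 by rewrite /log_rem2 expR0; ring.
have rem2D x : is_derive x 1 log_rem2 (- (1 - expR x) ^+ 2).
  by apply: is_derive_eq; rewrite /GRing.scale /=; field.
have rem2D_le0 x : - (1 - expR x) ^+ 2 <= 0 by rewrite oppr_le0 sqr_ge0.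
by have := nonincr_at0_of_derive_le0 rem2D rem2D_le0 t; rewrite rem2_0.
Qed.

Definition xlogx_rem t :=
  t * expR t + 1 - expR t - (1 - expR t) ^+ 2 / 2 - (1 - expR t) ^+ 3 / 6.

Lemma xlogx_rem_ge0 t : 0 <= xlogx_rem t.
Proof.
have -> : 0 = xlogx_rem 0 by rewrite /xlogx_rem expR0; ring.
apply: (@min_at0_of_derive_sign _ (fun x => - (expR x * log_rem2 x)))
  => [x|x x_le0|x x_ge0].
- by apply: is_derive_eq; rewrite /log_rem2 /GRing.scale /=; field.
- by rewrite oppr_le0 mulr_ge0 ?expR_ge0 // (log_rem2_sign x).2.
- by rewrite oppr_ge0 mulr_ge0_le0 ?expR_ge0 // (log_rem2_sign x).1.
Qed.

Lemma expR_mul_increment_le x0 x1 :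
  expR x1 * x1 - expR x0 * x0 <=
  (1 + (x1 - (expR x1 - expR x0) / (2 * expR x1)
          - (expR x1 - expR x0) ^+ 2 / (6 * expR x1 ^+ 2))) * (expR x1 - expR x0).
Proof.
have -> : x0 = x1 + (x0 - x1) by ring.
rewrite expRD; move: (x0 - x1) => t.
have e1_neq0 : expR x1 != 0 by rewrite gt_eqF ?expR_gt0.
rewrite -subr_ge0.
suff -> : (1 + (x1 - (expR x1 - expR x1 * expR t) / (2 * expR x1)
      - (expR x1 - expR x1 * expR t) ^+ 2 / (6 * expR x1 ^+ 2)))
      * (expR x1 - expR x1 * expR t) - (expR x1 * x1 - expR x1 * expR t * (x1 + t))
    = expR x1 * xlogx_rem t by rewrite mulr_ge0 ?expR_ge0 ?xlogx_rem_ge0.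
by rewrite /xlogx_rem; field.
Qed.

Lemma expR_increment_le x0 x1 :
  (expR x1 - expR x0) * (expR (- x1) + (expR x1 - expR x0) / (2 * expR x1 ^+ 2)
     + (expR x1 - expR x0) ^+ 2 / (3 * expR x1 ^+ 3)) <= x1 - x0.
Proof.
have -> : x0 = x1 + (x0 - x1) by ring.
rewrite expRD expRN; move: (x0 - x1) => t.
have e1_neq0 : expR x1 != 0 by rewrite gt_eqF ?expR_gt0.
rewrite -subr_ge0.
suff -> : x1 - (x1 + t) - (expR x1 - expR x1 * expR t) *
    ((expR x1)^-1 + (expR x1 - expR x1 * expR t) / (2 * expR x1 ^+ 2)
      + (expR x1 - expR x1 * expR t) ^+ 2 / (3 * expR x1 ^+ 3))
    = log_rem3 t by exact: log_rem3_ge0.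
by rewrite /log_rem3 /log_rem2; field.
Qed.

Lemma Rs_gt0 {N : nat} (xi0 xi1 : 'I_N -> R) i : 0 < Rs xi0 xi1 i.
Proof.
rewrite /Rs expRN.
set e1 := expR (xi1 i); have e1_gt0 : 0 < e1 by exact: expR_gt0.
set y := 1 - expR (xi0 i) / e1.
suff -> : e1^-1 + (e1 - expR (xi0 i)) / (2 * e1 ^+ 2)
          + (e1 - expR (xi0 i)) ^+ 2 / (3 * e1 ^+ 3)
        = e1^-1 * (1 + y / 2 + y ^+ 2 / 3).
  rewrite mulr_gt0 ?invr_gt0 //; have := sqr_ge0 (y + 3 / 4); nra.
by rewrite /y; field; rewrite gt_eqF.
Qed.

Lemma ln_sub_mul_sub_ge0 x y : 0 < x -> 0 < y -> 0 <= (ln x - ln y) * (x - y).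
Proof.
move=> x_gt0 y_gt0; have [xy|yx] := lerP x y.
  by rewrite mulr_le0 // subr_le0 // ler_ln.
by rewrite mulr_ge0 // subr_ge0 ?ler_ln // ltW.
Qed.

End ExpInequalities.

Section MeshSums.
Variables (R : realType) (N : nat) (Th : mesh R N).
Implicit Types (v w : 'I_N -> R) (s : face Th).

Lemma other_fc1 s : other s (fc1 s) = fc2 s.
Proof. by rewrite /other eqxx. Qed.

Lemma other_fc2 s : other s (fc2 s) = fc1 s.
Proof. by rewrite /other (negbTE (fc_neq s)). Qed.

Lemma Dg_fc2 w s : Dg w (fc2 s) s = - Dg w (fc1 s) s.
Proof. by rewrite /Dg other_fc1 other_fc2 opprB. Qed.

Lemma sum_incident (F : 'I_N -> face Th -> R) :
  \sum_i \sum_(s | incident i s) F i s = \sum_s (F (fc1 s) s + F (fc2 s) s).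
Proof.
under eq_bigr do rewrite big_mkcond.
rewrite exchange_big; apply: eq_bigr => s _ /=.
transitivity (\sum_i ((if fc1 s == i then F i s else 0)
                      + (if fc2 s == i then F i s else 0))).
  apply: eq_bigr => i _; rewrite /incident.
  case: eqP => [<-|_]; last by rewrite add0r.
  by rewrite eq_sym (negbTE (fc_neq s)) addr0.
rewrite big_split /= -!big_mkcond.
by rewrite (big_pred1 (fc1 s)) ?(big_pred1 (fc2 s)) // => i; rewrite /= eq_sym.
Qed.

Lemma sum_incident_antisym (F : 'I_N -> face Th -> R) :
  (forall s, F (fc2 s) s = - F (fc1 s) s) ->
  \sum_i \sum_(s | incident i s) F i s = 0.
Proof. by move=> Fanti; rewrite sum_incident big1 // => s _; rewrite Fanti subrr. Qed.

Lemma sum_by_parts (a : face Th -> R) v w :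
  \sum_i v i * (\sum_(s | incident i s) a s * Dg w i s)
  = - \sum_s a s * Dg w (fc1 s) s * Dg v (fc1 s) s.
Proof.
under eq_bigr do rewrite mulr_sumr.
rewrite sum_incident -sumrN; apply: eq_bigr => s _.
by rewrite Dg_fc2 [Dg v _ _]/Dg other_fc1; ring.
Qed.

Lemma tau_gt0 s : 0 < tau s.
Proof. by rewrite divr_gt0 ?fmeas_pos ?fdist_pos. Qed.

Lemma harm_gt0 v s : (forall j, 0 < v j) -> 0 < harm v s.
Proof.
by move=> v_gt0; rewrite /harm divr_gt0 ?mulr_gt0 ?addr_gt0 ?mulr_gt0 ?vol_pos.
Qed.

Lemma entropyE (M : nat) (CT : R) (eta : 'I_M -> 'I_N -> R) (xi : 'I_N -> R) :
  entropy Th CT eta xi =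
  \sum_i vol Th i * (CT * (xi i + 1) - \sum_(l < M) expR (eta l i) * eta l i).
Proof.
rewrite /entropy /ip exchange_big /= -sumrN -big_split /=; apply: eq_bigr => i _.
rewrite expRK mulrBr mulr_sumr addrC; congr (_ + _); first by ring.
by congr (- _); apply: eq_bigr => l _; rewrite expRK mulrA.
Qed.

End MeshSums.

Section SchemeII.
Context {R : realType} {N M d : nat} {Th : mesh R N}.
Context {eps kk CT dt : R} {nu z : 'I_M -> R}.
Context {Qf : 'I_M -> face Th -> R} {u : 'I_M -> 'I_N -> 'rV[R]_d}.
Context {eta0 eta1 : 'I_M -> 'I_N -> R} {psi0 psi1 xi0 xi1 : 'I_N -> R}.

Local Notation G := (@Gflux R N M Th nu z eta0 eta1 psi0 psi1 xi0 xi1).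
Local Notation Q := (Qs eta0 eta1).
Local Notation Rh := (Rs xi0 xi1).
Local Notation Tmid := (fun j => expR (mid xi0 xi1 j)).
Local Notation dc l i := (expR (eta1 l i) - expR (eta0 l i)).
Local Notation dT i := (expR (xi1 i) - expR (xi0 i)).

Lemma Gflux_fc2 l s : G l (fc2 s) s = - G l (fc1 s) s.
Proof. by rewrite /Gflux !Dg_fc2; ring. Qed.

Hypothesis dt_gt0 : 0 < dt.

Lemma mass_conservation l :
  scheme_a Th eps dt nu z eta0 eta1 psi0 psi1 xi0 xi1 ->
  ip Th (fun i => expR (eta1 l i)) (fun _ => 1)
  = ip Th (fun i => expR (eta0 l i)) (fun _ => 1).
Proof.
move=> sa; apply/eqP; rewrite -subr_eq0 /ip -sumrB; apply/eqP.
transitivity (- (dt * eps) *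
    \sum_i \sum_(s | incident i s) fmeas s * G l i s); last first.
  by rewrite sum_incident_antisym ?mulr0 // => s; rewrite Gflux_fc2 mulrN.
rewrite mulr_sumr; apply: eq_bigr => i _.
set flux := \sum_(s | incident i s) _.
transitivity (dt * vol Th i * (dc l i / dt + eps / vol Th i * flux)
              - dt * eps * flux).
  by field; rewrite gt_eqF ?vol_pos ?gt_eqF.
by rewrite /flux sa mulr0 sub0r mulNr.
Qed.

Definition entropy_production : R :=
  eps * (\sum_(l < M)
           ip Th (fun i => nu l * expR (mid (eta0 l) (eta1 l) i) * sqnorm (u l i)) Rh)
  + kk * \sum_(s : face Th)
           tau s * harm Tmid s * Dg (fun j => ln (Rh j)) (fc1 s) s * Dg Rh (fc1 s) s.

Lemma entropy_production_ge0 :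
  0 <= eps -> 0 <= kk -> (forall l, 0 <= nu l) -> 0 <= entropy_production.
Proof.
move=> eps_ge0 kk_ge0 nu_ge0.
have sqnorm_ge0 l i : 0 <= sqnorm (u l i) by apply: sumr_ge0 => k _; apply: sqr_ge0.
rewrite addr_ge0 // mulr_ge0 //; apply: sumr_ge0.
  move=> l _; apply: sumr_ge0 => i _.
  by rewrite !mulr_ge0 ?expR_ge0 // ltW ?vol_pos ?Rs_gt0.
move=> s _; rewrite -mulrA; apply: mulr_ge0; first apply: mulr_ge0.
- exact/ltW/tau_gt0.
- by apply/ltW/harm_gt0 => j; apply: expR_gt0.
- by rewrite /Dg other_fc1 ln_sub_mul_sub_ge0 ?Rs_gt0.
Qed.

Hypothesis CT_gt0 : 0 < CT.

Lemma entropy_increment_ge :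
  \sum_i vol Th i * (CT * dT i * Rh i - \sum_(l < M) (1 + Q l i) * dc l i) / dt
  <= (entropy Th CT eta1 xi1 - entropy Th CT eta0 xi0) / dt.
Proof.
rewrite !entropyE -sumrB mulr_suml; apply: ler_sum => i _.
rewrite ler_pM2r ?invr_gt0 // -mulrBr ler_pM2l ?vol_pos //.
set E1 := \sum_(l < M) expR (eta1 l i) * eta1 l i.
set E0 := \sum_(l < M) expR (eta0 l i) * eta0 l i.
have -> : CT * (xi1 i + 1) - E1 - (CT * (xi0 i + 1) - E0)
          = CT * (xi1 i - xi0 i) - (E1 - E0) by ring.
rewrite /E1 /E0 -sumrB; apply: lerB.
  by rewrite -mulrA ler_pM2l //; apply: expR_increment_le.
by apply: ler_sum => l _; apply: expR_mul_increment_le.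
Qed.

Local Notation kinetic i :=
  (\sum_(l < M) nu l * expR (mid (eta0 l) (eta1 l) i) * sqnorm (u l i)).

Lemma cell_entropy_balance i :
  scheme_c eps kk CT dt nu z Qf u eta0 eta1 psi0 psi1 xi0 xi1 ->
  vol Th i * (CT * dT i * Rh i - \sum_(l < M) (1 + Q l i) * dc l i) / dt
  = - kk * (Rh i * \sum_(s : face Th | incident i s)
                     tau s * harm Tmid s * Dg (fun j => ln (Rh j)) i s)
    + eps * (\sum_(l < M) \sum_(s | incident i s) fmeas s * G l i s * Qf l s)
    + eps * (vol Th i * Rh i * kinetic i).
Proof.
move=> sc.
have vol_neq0 := gt_eqF (vol_pos Th i); have Rh_neq0 := gt_eqF (Rs_gt0 _ xi0 xi1 i).
have PsE : Ps eps dt nu z Qf eta0 eta1 psi0 psi1 xi0 xi1 i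
  = eps / vol Th i * (\sum_(l < M) \sum_(s | incident i s) fmeas s * G l i s * Qf l s)
    + (\sum_(l < M) (1 + Q l i) * dc l i) / dt.
  by rewrite /Ps big_split /= -mulr_sumr -mulr_suml.
transitivity (vol Th i * Rh i * (CT * dT i / dt)
              - vol Th i * (\sum_(l < M) (1 + Q l i) * dc l i) / dt).
  by field; rewrite gt_eqF.
by rewrite sc PsE; field; rewrite gt_eqF ?vol_neq0 ?Rh_neq0.
Qed.

Lemma entropy_balance :
  scheme_c eps kk CT dt nu z Qf u eta0 eta1 psi0 psi1 xi0 xi1 ->
  \sum_i vol Th i * (CT * dT i * Rh i - \sum_(l < M) (1 + Q l i) * dc l i) / dt
  = entropy_production.
Proof.
move=> sc; under eq_bigr do rewrite cell_entropy_balance //.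
have flux_Q_sum0 : \sum_(l < M) \sum_i \sum_(s | incident i s) fmeas s * G l i s * Qf l s = 0.
  by apply: big1 => l _; apply: sum_incident_antisym => s; rewrite Gflux_fc2; ring.
rewrite !big_split /= -!mulr_sumr sum_by_parts exchange_big /= flux_Q_sum0.
rewrite /entropy_production /ip mulr0 addr0 mulrNN addrC [in RHS]exchange_big /=.
congr (_ * _ + _); apply: eq_bigr => i _.
by rewrite mulr_sumr; apply: eq_bigr => l _; ring.
Qed.

End SchemeII.

Theorem theorem3p4 (R : realType) (N M d : nat) (Th : mesh R N)
  (eps kk CT dt : R) (nu z : 'I_M -> R) (rhof : 'I_N -> R)
  (psiD : dface Th -> R) (gN : nface Th -> R)
  (Qf : 'I_M -> face Th -> R) (u : 'I_M -> 'I_N -> 'rV[R]_d)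
  (eta0 eta1 : 'I_M -> 'I_N -> R) (psi0 psi1 xi0 xi1 : 'I_N -> R) :
  0 < eps -> 0 < kk -> 0 < CT -> 0 < dt -> (forall l, 0 < nu l) ->
  schemeII eps kk CT dt nu z rhof psiD gN Qf u eta0 eta1 psi0 psi1 xi0 xi1 ->
  [/\ (* (1) mass conservation *)
      (forall l : 'I_M,
         ip Th (fun i => expR (eta1 l i)) (fun _ => 1)
         = ip Th (fun i => expR (eta0 l i)) (fun _ => 1)),
      (* (2) positivity *)
      (forall (l : 'I_M) (i : 'I_N), 0 < expR (eta1 l i) /\ 0 < expR (xi1 i)) &
      (* (3) discrete entropy increase *)
      let Rh := Rs xi0 xi1 in
      let rhs :=
        eps * (\sum_(l < M)
                 ip Th (fun i => nu l * expR (mid (eta0 l) (eta1 l) i)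
                                  * sqnorm (u l i)) Rh)
        + kk * \sum_(s : face Th)
                 tau s * harm (fun j => expR (mid xi0 xi1 j)) s
                   * Dg (fun j => ln (Rh j)) (fc1 s) s
                   * Dg Rh (fc1 s) s in
      (entropy Th CT eta1 xi1 - entropy Th CT eta0 xi0) / dt >= rhs
      /\ rhs >= 0].
Proof.
move=> eps_gt0 kk_gt0 CT_gt0 dt_gt0 nu_gt0 [sa _ sc].
split=> [l | l i | Rh rhs].
- exact: mass_conservation dt_gt0 l sa.
- by split; apply: expR_gt0.
split.
- apply: le_trans (entropy_increment_ge dt_gt0 CT_gt0).
  by rewrite (entropy_balance dt_gt0 sc).
- by apply: entropy_production_ge0 => [||l]; rewrite ltW.
Qed.
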